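(* Let $m\ge4$, $3\le i\le m$, and let $p=(p_1,\dots,p_m)$ be an ordered tuple of distinct points of $\overline{\mathbf H^n_{\mathbb H}}$ with $p_1,\dots,p_i\in\partial\mathbf H^n_{\mathbb H}$ and $p_{i+1},\dots,p_m\in\mathbf H^n_{\mathbb H}$. Suppose the Gram matrix of the lift $\mathbf p=(\mathbf p_1,\dots,\mathbf p_m)$ is semi-normalized, and let $\lambda_1,\dots,\lambda_m$ be nonzero quaternions. Then the Gram matrix of the lift $\mathbf p'=(\mathbf p_1\lambda_1,\dots,\mathbf p_m\lambda_m)$ is semi-normalized if and only if $\lambda_1=\lambda_2=\cdots=\lambda_m$ and $|\lambda_1|=1$.
   Context: $\mathbb H^{n,1}$ is the right quaternionic vector space $\mathbb H^{n+1}$ with Hermitian form $\langle\mathbf z,\mathbf w\rangle=\bar w_{n+1}z_1+\bar w_2z_2+\cdots+\bar w_nz_n+\bar w_1z_{n+1}$; $\mathbf H^n_{\mathbb H}$ (resp. $\partial\mathbf H^n_{\mathbb H}$) consists of quaternionic lines of negative (resp. nonzero null) vectors, and a lift of a point is a spanning vector. The Gram matrix of a lift is $G=(g_{kj})$, $g_{kj}=\langle\mathbf p_j,\mathbf p_k\rangle$; it is semi-normalized if $g_{kk}=0$ for $k\le i$, $g_{kk}=-1$ for $k>i$, $g_{1j}=1$ for $2\le j\le i$, $|g_{23}|=1$, and $g_{1j}$ is a positive real number for $i<j\le m$. *)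

From HB Require Import structures.
From mathcomp Require Import all_boot all_order all_algebra.
Set Implicit Arguments. Unset Strict Implicit. Unset Printing Implicit Defensive.
Import Order.TTheory GRing.Theory Num.Theory.
Local Open Scope ring_scope.

Record quat (R : rcfType) := Quat { qr : R; qi : R; qj : R; qk : R }.

Section Quat.
Variable R : rcfType.

Definition realq (r : R) : quat R := Quat r 0 0 0.
Definition qzero : quat R := realq 0.
Definition qone : quat R := realq 1.

Definition qadd (p q : quat R) : quat R :=
  Quat (qr p + qr q) (qi p + qi q) (qj p + qj q) (qk p + qk q).

Definition qmul (p q : quat R) : quat R :=
  Quat (qr p * qr q - qi p * qi q - qj p * qj q - qk p * qk q)
       (qr p * qi q + qi p * qr q + qj p * qk q - qk p * qj q)
       (qr p * qj q - qi p * qk q + qj p * qr q + qk p * qi q)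
       (qr p * qk q + qi p * qj q - qj p * qi q + qk p * qr q).

Definition qconj (p : quat R) : quat R := Quat (qr p) (- qi p) (- qj p) (- qk p).

Definition qabs (p : quat R) : R :=
  Num.sqrt (qr p ^+ 2 + qi p ^+ 2 + qj p ^+ 2 + qk p ^+ 2).

(* vectors of H^{n,1} = H^{n+1}, coordinates z_1..z_{n+1} are indices 0..n *)
Definition qvec (n : nat) := 'I_n.+1 -> quat R.

Definition vscale n (z : qvec n) (l : quat R) : qvec n := fun a => qmul (z a) l.

Definition hform n (z w : qvec n) : quat R :=
  qadd (qmul (qconj (w ord_max)) (z ord0))
    (qadd (\big[qadd/qzero]_(k < n.+1 | (0 < (k : nat) < n)%N) qmul (qconj (w k)) (z k))
          (qmul (qconj (w ord0)) (z ord_max))).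

Definition vnonzero n (z : qvec n) : Prop := exists a, z a <> qzero.

(* z spans a point of the boundary: nonzero null vector *)
Definition null_vec n (z : qvec n) : Prop := vnonzero z /\ hform z z = qzero.

(* z spans a point of H^n_H: negative vector (<z,z> is a negative real) *)
Definition neg_vec n (z : qvec n) : Prop := exists r : R, r < 0 /\ hform z z = realq r.

Definition same_line n (z w : qvec n) : Prop := exists l : quat R, z = vscale w l.

(* Gram matrix of the lift p (points indexed 1..m): g_{kj} = <p_j, p_k> *)
Definition gram n (p : nat -> qvec n) (k j : nat) : quat R := hform (p j) (p k).

Definition semi_normalized (m i : nat) (g : nat -> nat -> quat R) : Prop :=
  [/\ (forall k, (1 <= k <= i)%N -> g k k = qzero),
      (forall k, (i < k <= m)%N -> g k k = realq (-1)),
      (forall j, (2 <= j <= i)%N -> g 1%N j = qone),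
      qabs (g 2%N 3%N) = 1 &
      (forall j, (i < j <= m)%N -> exists r : R, 0 < r /\ g 1%N j = realq r)].

End Quat.

(** The rescaled Gram matrix is [g'_kj = conj(λ_k) g_kj λ_j], and the modulus of quaternions
    is multiplicative. From [g'_12 = g'_13 = 1] and [|g'_23| = |g_23| = 1] one gets
    [|λ_1|^4 = (|λ_1| |λ_2|)^2 (|λ_1| |λ_3|)^2 / (|λ_2| |λ_3|)^2 = 1], so [|λ_1| = 1], and then
    [conj(λ_1) λ_j = 1] forces [λ_j = λ_1] for [j <= i]. For [k > i], [g'_kk = -1] gives
    [|λ_k| = 1], and positivity of [g_1k] and [g'_1k] makes [conj(λ_1) λ_k] a positive real of
    modulus one, i.e. [1]. Conversely a common unit scalar fixes every normalized entry, because
    real quaternions are central. *)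
From mathcomp Require Import all_boot all_order all_algebra.
From mathcomp Require Import ring lra zify.
Import Order.TTheory GRing.Theory Num.Theory.
Local Open Scope ring_scope.
Set Implicit Arguments. Unset Strict Implicit.

Section QuaternionAlgebra.
Variable R : rcfType.
Implicit Types (x y z : quat R) (r s : R).

Definition qnorm2 x : R := qr x ^+ 2 + qi x ^+ 2 + qj x ^+ 2 + qk x ^+ 2.

Lemma qmulA x y z : qmul x (qmul y z) = qmul (qmul x y) z.
Proof. by case: x y z => ? ? ? ? [? ? ? ?] [? ? ? ?]; congr Quat; rewrite /=; ring. Qed.

Lemma qmulDl x y z : qmul (qadd x y) z = qadd (qmul x z) (qmul y z).
Proof. by case: x y z => ? ? ? ? [? ? ? ?] [? ? ? ?]; congr Quat; rewrite /=; ring. Qed.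

Lemma qmulDr x y z : qmul x (qadd y z) = qadd (qmul x y) (qmul x z).
Proof. by case: x y z => ? ? ? ? [? ? ? ?] [? ? ? ?]; congr Quat; rewrite /=; ring. Qed.

Lemma qmul0q x : qmul (qzero R) x = qzero R.
Proof. by case: x => ? ? ? ?; congr Quat; rewrite /=; ring. Qed.

Lemma qmulq0 x : qmul x (qzero R) = qzero R.
Proof. by case: x => ? ? ? ?; congr Quat; rewrite /=; ring. Qed.

Lemma qmul1q x : qmul (qone R) x = x.
Proof. by case: x => ? ? ? ?; congr Quat; rewrite /=; ring. Qed.

Lemma qmulq1 x : qmul x (qone R) = x.
Proof. by case: x => ? ? ? ?; congr Quat; rewrite /=; ring. Qed.

Lemma qmul_real r s : qmul (realq r) (realq s) = realq (r * s).
Proof. by congr Quat; rewrite /=; ring. Qed.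

Lemma qmul_realC r x : qmul (realq r) x = qmul x (realq r).
Proof. by case: x => ? ? ? ?; congr Quat; rewrite /=; ring. Qed.

Lemma realq_inj : injective (@realq R).
Proof. by move=> r s []. Qed.

Lemma qconjM x y : qconj (qmul x y) = qmul (qconj y) (qconj x).
Proof. by case: x y => ? ? ? ? [? ? ? ?]; congr Quat; rewrite /=; ring. Qed.

Lemma qmul_conjl x : qmul (qconj x) x = realq (qnorm2 x).
Proof. by case: x => ? ? ? ?; congr Quat; rewrite /= /qnorm2 /=; ring. Qed.

Lemma qmul_conjr x : qmul x (qconj x) = realq (qnorm2 x).
Proof. by case: x => ? ? ? ?; congr Quat; rewrite /= /qnorm2 /=; ring. Qed.

Lemma qnorm2M x y : qnorm2 (qmul x y) = qnorm2 x * qnorm2 y.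
Proof. by case: x y => ? ? ? ? [? ? ? ?]; rewrite /qnorm2 /=; ring. Qed.

Lemma qnorm2_conj x : qnorm2 (qconj x) = qnorm2 x.
Proof. by case: x => ? ? ? ?; rewrite /qnorm2 /=; ring. Qed.

Lemma qnorm2_real r : qnorm2 (realq r) = r ^+ 2.
Proof. by rewrite /qnorm2 /=; ring. Qed.

Lemma qnorm2_ge0 x : 0 <= qnorm2 x.
Proof. by rewrite /qnorm2 !addr_ge0 ?sqr_ge0. Qed.

Lemma qabs_eq1 x : qabs x = 1 <-> qnorm2 x = 1.
Proof.
rewrite /qabs -/(qnorm2 x); split=> [x1|->]; last exact: sqrtr1.
by rewrite -[qnorm2 x](sqr_sqrtr (qnorm2_ge0 x)) x1 expr1n.
Qed.

Lemma qnorm2_sqr_eq1 x : qnorm2 x ^+ 2 = 1 -> qnorm2 x = 1.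
Proof. by move/eqP; rewrite sqrp_eq1 ?qnorm2_ge0 // => /eqP. Qed.

Lemma qsandwich_real x r : qmul (qconj x) (qmul (realq r) x) = realq (r * qnorm2 x).
Proof. by rewrite qmul_realC qmulA qmul_conjl qmul_real mulrC. Qed.

Lemma qmul_realK r x : r != 0 -> qmul (realq r^-1) (qmul (realq r) x) = x.
Proof. by move=> r0; rewrite qmulA qmul_real mulVf // qmul1q. Qed.

Lemma qnorm2_sandwich x y z :
  qnorm2 (qmul (qconj x) (qmul y z)) = qnorm2 x * qnorm2 y * qnorm2 z.
Proof. by rewrite !qnorm2M qnorm2_conj mulrA. Qed.

Lemma unit_qconj_mul_real x y s :
  qnorm2 x = 1 -> qmul (qconj x) y = realq s -> y = qmul x (realq s).
Proof.
by move=> x1 <-; rewrite qmulA qmul_conjr x1 -[y in LHS]qmul1q.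
Qed.

Lemma unit_qconj_mul_one x y : qnorm2 x = 1 -> qmul (qconj x) y = qone R -> y = x.
Proof. by move=> x1 /(unit_qconj_mul_real x1) ->; rewrite qmulq1. Qed.

Lemma unit_qconj_mul_pos x y s : qnorm2 x = 1 -> qnorm2 y = 1 -> 0 < s ->
  qmul (qconj x) y = realq s -> y = x.
Proof.
move=> x1 y1 s_gt0 xy; apply: unit_qconj_mul_one => //; rewrite xy.
have /eqP : s ^+ 2 = 1 by rewrite -qnorm2_real -xy qnorm2M qnorm2_conj x1 y1 mulr1.
by rewrite sqrp_eq1 ?ltW // => /eqP ->.
Qed.

Lemma hform_vscale n (z w : qvec R n) x y :
  hform (vscale z x) (vscale w y) = qmul (qconj y) (qmul (hform z w) x).
Proof.
pose f u := qmul (qconj y) (qmul u x).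
have fD u v : f (qadd u v) = qadd (f u) (f v) by rewrite /f qmulDl qmulDr.
have f0 : f (qzero R) = qzero R by rewrite /f qmul0q qmulq0.
have fE a b : qmul (qconj (qmul a y)) (qmul b x) = f (qmul (qconj a) b).
  by rewrite /f qconjM !qmulA.
rewrite /hform !fE -/(f (hform z w)) /hform !fD (big_morph f fD f0).
by congr (qadd _ (qadd _ _)); apply: eq_bigr => k _; rewrite fE.
Qed.

Lemma gram_vscale n (p : nat -> qvec R n) (lambda : nat -> quat R) k j :
  gram (fun k => vscale (p k) (lambda k)) k j =
  qmul (qconj (lambda k)) (qmul (gram p k j) (lambda j)).
Proof. exact: hform_vscale. Qed.

End QuaternionAlgebra.

Section RescaledLift.
Variables (R : rcfType) (n m i : nat) (p : nat -> qvec R n) (lambda : nat -> quat R).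
Hypotheses (i_ge3 : (3 <= i)%N) (i_le_m : (i <= m)%N).
Hypothesis p_sn : semi_normalized m i (gram p).

Local Notation p' := (fun k => vscale (p k) (lambda k)).

Lemma semi_normalized_vscale_of_const :
  (forall k, (1 <= k <= m)%N -> lambda k = lambda 1%N) -> qnorm2 (lambda 1%N) = 1 ->
  semi_normalized m i (gram p').
Proof.
case: p_sn => null_p neg_p one_p g23 pos_p lambda_eq l1.
have entryE k j : (1 <= k <= m)%N -> (1 <= j <= m)%N ->
    gram p' k j = qmul (qconj (lambda 1%N)) (qmul (gram p k j) (lambda 1%N)).
  by move=> km jm; rewrite gram_vscale !lambda_eq.
split.
- by move=> k ki; rewrite entryE ?null_p ?qmul0q ?qmulq0 //; lia.
- by move=> k km; rewrite entryE ?neg_p ?qsandwich_real ?l1 ?mulr1 //; lia.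
- by move=> j ji; rewrite entryE ?one_p ?qsandwich_real ?l1 ?mulr1 //; lia.
- rewrite qabs_eq1 entryE ?qnorm2_sandwich; try lia.
  by rewrite l1 (qabs_eq1 _).1 // !mulr1.
- move=> j jm; have [r [r_gt0 g1j]] := pos_p j jm; exists r; split=> //.
  by rewrite entryE ?g1j ?qsandwich_real ?l1 ?mulr1 //; lia.
Qed.

Hypothesis p'_sn : semi_normalized m i (gram p').

Lemma qnorm2_lambda1_of_semi_normalized : qnorm2 (lambda 1%N) = 1.
Proof.
case: p_sn p'_sn => _ _ one_p g23 _ [_ _ one_p' g'23 _].
have norm_first j : (2 <= j <= i)%N -> qnorm2 (lambda 1%N) * qnorm2 (lambda j) = 1.
  move=> ji; have := congr1 (@qnorm2 R) (one_p' j ji).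
  by rewrite gram_vscale one_p // qmul1q qnorm2M qnorm2_conj qnorm2_real expr1n.
have norm23 : qnorm2 (lambda 2%N) * qnorm2 (lambda 3%N) = 1.
  move: g'23; rewrite gram_vscale qabs_eq1 qnorm2_sandwich.
  by rewrite ((qabs_eq1 _).1 g23) mulr1.
apply: qnorm2_sqr_eq1; rewrite -[LHS]mulr1 -norm23.
set a := qnorm2 (lambda 1%N); set b := qnorm2 (lambda 2%N); set c := qnorm2 (lambda 3%N).
have -> : a ^+ 2 * (b * c) = (a * b) * (a * c) by ring.
by rewrite !norm_first ?mulr1 //; lia.
Qed.

Lemma vscale_const_of_semi_normalized : forall k, (1 <= k <= m)%N -> lambda k = lambda 1%N.
Proof.
have l1 := qnorm2_lambda1_of_semi_normalized.
case: p_sn p'_sn => _ neg_p one_p _ pos_p [_ neg_p' one_p' _ pos_p'].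
move=> k km; case: (leqP k i) => [ki | ik].
  case: (ltnP 1 k) => [k_gt1 | k_le1]; last by have -> : k = 1%N by lia.
  have kj : (2 <= k <= i)%N by lia.
  apply: unit_qconj_mul_one l1 _.
  by have := one_p' k kj; rewrite gram_vscale one_p // qmul1q.
have kj : (i < k <= m)%N by lia.
have lk : qnorm2 (lambda k) = 1.
  have := neg_p' k kj; rewrite gram_vscale neg_p // qsandwich_real.
  by move=> /realq_inj; lra.
have [r [r_gt0 g1k]] := pos_p k kj.
have [s [s_gt0 g'1k]] := pos_p' k kj.
apply: (@unit_qconj_mul_pos _ _ _ (r^-1 * s)) => //; first by rewrite mulr_gt0 ?invr_gt0.
rewrite -qmul_real -g'1k gram_vscale g1k qmulA qmul_realC -qmulA.
by rewrite qmul_realK ?gt_eqF.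
Qed.

End RescaledLift.

Theorem lemma8p5 (R : rcfType) (n m i : nat) (p : nat -> qvec R n)
  (lambda : nat -> quat R) :
  (1 <= n)%N -> (4 <= m)%N -> (3 <= i <= m)%N ->
  (forall k, (1 <= k <= i)%N -> null_vec (p k)) ->
  (forall k, (i < k <= m)%N -> neg_vec (p k)) ->
  (forall j k, (1 <= j <= m)%N -> (1 <= k <= m)%N -> j <> k ->
     ~ same_line (p j) (p k)) ->
  semi_normalized m i (gram p) ->
  (forall k, (1 <= k <= m)%N -> lambda k <> qzero R) ->
  (semi_normalized m i (gram (fun k => vscale (p k) (lambda k))) <->
   ((forall k, (1 <= k <= m)%N -> lambda k = lambda 1%N) /\ qabs (lambda 1%N) = 1)).
Proof.
move=> _ _ /andP[i_ge3 i_le_m] _ _ _ p_sn _.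
split=> [p'_sn | [lambda_eq /qabs_eq1 l1]].
- split; first exact: vscale_const_of_semi_normalized i_ge3 i_le_m p_sn p'_sn.
  exact/qabs_eq1/(qnorm2_lambda1_of_semi_normalized i_ge3 i_le_m p_sn p'_sn).
- exact: semi_normalized_vscale_of_const i_ge3 i_le_m p_sn lambda_eq l1.
Qed.
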